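(* For all integers $n\ge 0$ and $k\ge 1$, $$(k+1)(n+1-k)\,b_n^{(k-1)}=\left(k(k+1)-n-1\right)b_n^{(k)}+k(n+k+2)\,b_n^{(k+1)}.$$
   Context: Let $X(\theta)=1+2\cos\theta$ and, for $k\ge 0$, $\chi_k(\theta)=1+2\sum_{j=1}^{k}\cos(j\theta)$ (the character of the $(k+1)$-dimensional irreducible representation of the Lie algebra $A_1$). For $n\ge 0$ the integers $b_n^{(k)}$, $0\le k\le n$, are the unique coefficients with $X(\theta)^n=\sum_{k=0}^{n}b_n^{(k)}\chi_k(\theta)$ for all real $\theta$; set $b_n^{(k)}=0$ for $k>n$. *)

From Stdlib Require Import Reals ZArith.
Open Scope R_scope.

Definition Xf (t : R) : R := 1 + 2 * cos t.

Fixpoint csum (k : nat) (t : R) : R :=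
  match k with
  | O => 0
  | S k' => csum k' t + cos (INR (S k') * t)
  end.

Definition chi (k : nat) (t : R) : R := 1 + 2 * csum k t.

Definition is_b (b : nat -> nat -> Z) : Prop :=
  (forall (n : nat) (t : R),
      (Xf t) ^ n = sum_f_R0 (fun k => IZR (b n k) * chi k t) n) /\
  (forall n k : nat, (n < k)%nat -> b n k = 0%Z).

From Stdlib Require Import Reals ZArith Lra Lia.

(* 1. Uniqueness of expansions.  The functions cos (j t), 0 <= j <= n, are
      linearly independent: for N = n and h = pi/N the operator
      f |-> f(t+h) + f(t-h) - 2 cos(Nh) f(t) annihilates cos (N t) and rescales
      every lower cos (j t) by 2 (cos (j h) + 1) <> 0, so induction on n applies.  Since
      chi_k = chi_(k-1) + 2 cos (k t), the characters chi_0, ..., chi_n are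
      linearly independent as well.
   2. Clebsch-Gordan rule.  X chi_k = chi_(k+1) + chi_k + chi_(k-1) (with
      chi_(-1) read as 0), hence the rows of b satisfy the Pascal-like
      recurrence b_(n+1)^(k) = b_n^(k-1) + b_n^(k) + b_n^(k+1).
   3. Propagation.  Writing D_n(k) for the defect of the claimed identity,
      the defects of row n+1 are explicit integer combinations of those of
      row n (two polynomial identities), and row 0 has no defect. *)

Open Scope R_scope.

Definition cos_sum (A : nat -> R) (n : nat) (t : R) : R :=
  sum_f_R0 (fun j => A j * cos (INR j * t)) n.

Lemma sum_f_R0_zero (f : nat -> R) (n : nat) :
  (forall j, (j <= n)%nat -> f j = 0) -> sum_f_R0 f n = 0.
Proof.
  induction n as [|n IH]; intros Hf; simpl.
  - apply Hf; lia.
  - rewrite IH by (intros; apply Hf; lia). rewrite Hf by lia. ring.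
Qed.

Lemma cos_sum_shift (A : nat -> R) (h c t : R) (m : nat) :
  2 * cos_sum (fun j => A j * (cos (INR j * h) - c)) m t =
  cos_sum A m (t + h) + cos_sum A m (t - h) - 2 * c * cos_sum A m t.
Proof.
  unfold cos_sum; induction m as [|m IH]; cbn [sum_f_R0].
  - rewrite !Rmult_0_l, !cos_0. ring.
  - rewrite Rmult_plus_distr_l, IH.
    replace (INR (S m) * (t + h)) with (INR (S m) * t + INR (S m) * h) by ring.
    replace (INR (S m) * (t - h)) with (INR (S m) * t - INR (S m) * h) by ring.
    rewrite cos_plus, cos_minus. ring.
Qed.

Lemma cos_gt_m1 (x : R) : 0 <= x < PI -> -1 < cos x.
Proof.
  intros [H0 HPI]. rewrite <- cos_PI.
  pose proof PI_RGT_0. apply cos_decreasing_1; lra.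
Qed.

Lemma cos_frac_pi_ne (n j : nat) :
  (j <= n)%nat -> cos (INR j * (PI / INR (S n))) - cos (INR (S n) * (PI / INR (S n))) <> 0.
Proof.
  intros Hj.
  pose proof PI_RGT_0.
  assert (Hpos : 0 < INR (S n)) by (apply lt_0_INR; lia).
  assert (Hjn : INR j < INR (S n)) by (apply lt_INR; lia).
  assert (0 <= INR j) by apply pos_INR.
  replace (INR (S n) * (PI / INR (S n))) with PI by (field; lra).
  rewrite cos_PI.
  assert (Hlt : -1 < cos (INR j * (PI / INR (S n)))).
  { apply cos_gt_m1. split.
    - apply Rmult_le_pos; [lra | apply Rlt_le, Rdiv_lt_0_compat; lra].
    - apply Rmult_lt_reg_r with (INR (S n)); [lra|].
      replace (INR j * (PI / INR (S n)) * INR (S n)) with (PI * INR j) by (field; lra).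
      nra. }
  lra.
Qed.

Lemma cos_sum_zero_coeffs (n : nat) :
  forall A, (forall t, cos_sum A n t = 0) -> forall j, (j <= n)%nat -> A j = 0.
Proof.
  induction n as [|n IH]; intros A HA j Hj.
  - assert (j = 0%nat) by lia; subst.
    specialize (HA 0). unfold cos_sum in HA; simpl in HA.
    rewrite Rmult_0_l, cos_0 in HA. lra.
  - set (h := PI / INR (S n)).
    assert (Hlow : forall i, (i <= n)%nat -> A i = 0).
    { intros i Hi.
      assert (Hshift : forall t,
                cos_sum (fun j => A j * (cos (INR j * h) - cos (INR (S n) * h))) n t = 0).
      { intros t.
        pose proof (cos_sum_shift A h (cos (INR (S n) * h)) t (S n)) as E.
        rewrite !HA in E. unfold cos_sum in E; cbn [sum_f_R0] in E.
        rewrite Rminus_diag, Rmult_0_r, Rmult_0_l, Rplus_0_r in E.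
        unfold cos_sum. lra. }
      pose proof (IH _ Hshift i Hi) as Hprod; cbv beta in Hprod.
      destruct (Rmult_integral _ _ Hprod) as [Hz | Hz]; [exact Hz|].
      exfalso. exact (cos_frac_pi_ne n i Hi Hz). }
    destruct (Nat.le_gt_cases j n) as [Hjn | Hjn]; [now apply Hlow|].
    assert (j = S n) by lia; subst.
    specialize (HA 0). unfold cos_sum in HA; cbn [sum_f_R0] in HA.
    rewrite sum_f_R0_zero in HA by (intros; rewrite Hlow by lia; ring).
    rewrite Rmult_0_r, cos_0 in HA. lra.
Qed.

Definition cos_poly (n : nat) (f : R -> R) : Prop :=
  exists A, forall t, f t = cos_sum A n t.

Lemma cos_poly_ext (n : nat) (f g : R -> R) :
  cos_poly n f -> (forall t, g t = f t) -> cos_poly n g.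
Proof. intros [A HA] H. exists A. intros t. rewrite H; auto. Qed.

Lemma cos_poly_add (n : nat) (f g : R -> R) :
  cos_poly n f -> cos_poly n g -> cos_poly n (fun t => f t + g t).
Proof.
  intros [A HA] [B HB]. exists (fun j => A j + B j). intros t.
  rewrite HA, HB. unfold cos_sum. rewrite <- plus_sum.
  apply sum_eq. intros; ring.
Qed.

Lemma cos_poly_scal (n : nat) (f : R -> R) (c : R) :
  cos_poly n f -> cos_poly n (fun t => c * f t).
Proof.
  intros [A HA]. exists (fun j => c * A j). intros t.
  rewrite HA. unfold cos_sum. rewrite scal_sum.
  apply sum_eq. intros; ring.
Qed.

Lemma cos_sum_extend (A : nat -> R) (n : nat) (c t : R) :
  cos_sum (fun j => if (j <=? n)%nat then A j else c) (S n) t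
  = cos_sum A n t + c * cos (INR (S n) * t).
Proof.
  unfold cos_sum. cbn [sum_f_R0].
  rewrite (proj2 (Nat.leb_gt (S n) n)) by lia. f_equal.
  apply sum_eq. intros i Hi. now rewrite (proj2 (Nat.leb_le i n) Hi).
Qed.

Lemma cos_poly_next (n : nat) (f : R -> R) (c : R) :
  cos_poly n f -> cos_poly (S n) (fun t => f t + c * cos (INR (S n) * t)).
Proof.
  intros [A HA]. exists (fun j => if (j <=? n)%nat then A j else c).
  intros t. now rewrite cos_sum_extend, HA.
Qed.

Lemma cos_poly_succ (n : nat) (f : R -> R) : cos_poly n f -> cos_poly (S n) f.
Proof.
  intros Hf. apply cos_poly_ext with (fun t => f t + 0 * cos (INR (S n) * t)).
  - now apply cos_poly_next.
  - intros; ring.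
Qed.

Lemma cos_poly_top_coeff (n : nat) (f : R -> R) (c : R) :
  cos_poly n f -> (forall t, f t + c * cos (INR (S n) * t) = 0) -> c = 0.
Proof.
  intros [A HA] Hzero.
  set (D := fun j => if (j <=? n)%nat then A j else c).
  assert (HD : forall t, cos_sum D (S n) t = 0).
  { intros t. unfold D. rewrite cos_sum_extend, <- HA. apply Hzero. }
  pose proof (cos_sum_zero_coeffs (S n) D HD (S n) (le_n _)) as Htop.
  unfold D in Htop. now rewrite (proj2 (Nat.leb_gt (S n) n)) in Htop by lia.
Qed.

Lemma chi_S (k : nat) (t : R) : chi (S k) t = chi k t + 2 * cos (INR (S k) * t).
Proof. unfold chi. cbn [csum]. ring. Qed.

Lemma cos_poly_chi (k : nat) : cos_poly k (chi k).
Proof.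
  induction k as [|k IH].
  - exists (fun _ => 1). intros t. unfold cos_sum, chi; simpl.
    rewrite Rmult_0_l, cos_0. ring.
  - apply cos_poly_ext with (fun t => chi k t + 2 * cos (INR (S k) * t)).
    + now apply cos_poly_next.
    + intros; apply chi_S.
Qed.

Lemma cos_poly_chi_sum (n : nat) (a : nat -> R) :
  cos_poly n (fun t => sum_f_R0 (fun k => a k * chi k t) n).
Proof.
  induction n as [|n IH]; cbn [sum_f_R0].
  - apply cos_poly_scal with (f := chi 0), cos_poly_chi.
  - apply cos_poly_add.
    + now apply cos_poly_succ.
    + apply cos_poly_scal with (f := chi (S n)), cos_poly_chi.
Qed.

Lemma chi_sum_zero_coeffs (n : nat) :
  forall a, (forall t, sum_f_R0 (fun k => a k * chi k t) n = 0) ->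
  forall k, (k <= n)%nat -> a k = 0.
Proof.
  induction n as [|n IH]; intros a Ha k Hk.
  - assert (k = 0%nat) by lia; subst.
    specialize (Ha 0). unfold chi in Ha; simpl in Ha. lra.
  - (* chi_(n+1) = chi_n + 2 cos ((n+1) t) isolates the top coefficient *)
    set (low := fun t => sum_f_R0 (fun k => a k * chi k t) n + a (S n) * chi n t).
    assert (Hsplit : forall t, low t + 2 * a (S n) * cos (INR (S n) * t) = 0).
    { intros t. rewrite <- (Ha t). unfold low. cbn [sum_f_R0]. rewrite chi_S. ring. }
    assert (Htop : 2 * a (S n) = 0).
    { apply (cos_poly_top_coeff n low); [|exact Hsplit].
      apply cos_poly_add; [apply cos_poly_chi_sum|].
      apply cos_poly_scal, cos_poly_chi. }
    destruct (Nat.le_gt_cases k n) as [Hkn | Hkn].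
    + apply (IH a); [|exact Hkn]. intros t.
      specialize (Hsplit t). unfold low in Hsplit.
      replace (a (S n)) with 0 in Hsplit by lra. lra.
    + assert (k = S n) by lia; subst. lra.
Qed.

Lemma X_chi0 (t : R) : Xf t * chi 0 t = chi 1 t.
Proof. unfold Xf, chi; simpl. rewrite Rmult_1_l. ring. Qed.

Lemma two_cos_chi (k : nat) (t : R) :
  2 * cos t * chi (S k) t = chi (S (S k)) t + chi k t.
Proof.
  induction k as [|k IH].
  - rewrite !chi_S. unfold chi; simpl csum.
    replace (INR 2 * t) with (t + t) by (simpl; ring).
    replace (INR 1 * t) with t by (simpl; ring).
    rewrite cos_plus. pose proof (sin2_cos2 t) as Hpyth. unfold Rsqr in Hpyth. nra.
  - rewrite (chi_S (S k) t) at 1. rewrite Rmult_plus_distr_l, IH.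
    replace (2 * cos t * (2 * cos (INR (S (S k)) * t)))
      with (2 * (cos (INR (S (S k)) * t + t) + cos (INR (S (S k)) * t - t)))
      by (rewrite cos_plus, cos_minus; ring).
    replace (INR (S (S k)) * t + t) with (INR (S (S (S k))) * t)
      by (rewrite (S_INR (S (S k))); ring).
    replace (INR (S (S k)) * t - t) with (INR (S k) * t)
      by (rewrite (S_INR (S k)); ring).
    rewrite (chi_S (S (S k)) t), (chi_S k t). ring.
Qed.

Lemma X_chiS (k : nat) (t : R) :
  Xf t * chi (S k) t = chi (S (S k)) t + chi (S k) t + chi k t.
Proof. unfold Xf at 1. rewrite Rmult_plus_distr_r, two_cos_chi. ring. Qed.

(* Coefficients of X * (sum_k x_k chi_k): x_(k-1) + x_k + x_(k+1), with x_(-1) = 0. *)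
Definition next_row (x : nat -> Z) (k : nat) : Z :=
  match k with
  | O => x 1%nat
  | S j => (x j + x (S j) + x (S (S j)))%Z
  end.

(* Multiplying a character sum of length m+1 by X, up to the boundary terms
   contributed by the coefficients x_(m+1), x_(m+2) that do not occur on the left. *)
Lemma X_chi_sum (x : nat -> Z) (t : R) (m : nat) :
  Xf t * sum_f_R0 (fun k => IZR (x k) * chi k t) m =
  sum_f_R0 (fun k => IZR (next_row x k) * chi k t) (S m)
  - IZR (x (S m)) * (chi m t + chi (S m) t) - IZR (x (S (S m))) * chi (S m) t.
Proof.
  induction m as [|m IH]; cbn [sum_f_R0 next_row]; rewrite ?plus_IZR.
  - replace (Xf t * (IZR (x 0%nat) * chi 0 t)) with (IZR (x 0%nat) * (Xf t * chi 0 t)) by ring.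
    rewrite X_chi0. ring.
  - cbn [sum_f_R0] in IH. rewrite Rmult_plus_distr_l, IH.
    replace (Xf t * (IZR (x (S m)) * chi (S m) t))
      with (IZR (x (S m)) * (Xf t * chi (S m) t)) by ring.
    rewrite X_chiS. cbn [next_row]. rewrite !plus_IZR. ring.
Qed.

Lemma row_recurrence (b : nat -> nat -> Z) (Hb : is_b b) (n k : nat) :
  b (S n) k = next_row (b n) k.
Proof.
  destruct Hb as [Hexp Hvan].
  destruct (Nat.le_gt_cases k (S n)) as [Hk | Hk].
  - apply eq_IZR. apply Rminus_diag_uniq.
    apply (chi_sum_zero_coeffs (S n) (fun k => IZR (b (S n) k) - IZR (next_row (b n) k)));
      [|exact Hk].
    intros t.
    rewrite (sum_eq _ (fun k => IZR (b (S n) k) * chi k t - IZR (next_row (b n) k) * chi k t))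
      by (intros; ring).
    rewrite minus_sum, <- Hexp. simpl pow. rewrite Hexp, X_chi_sum.
    rewrite !Hvan by lia. ring.
  - rewrite Hvan by lia. destruct k as [|j]; [lia|]. cbn [next_row].
    rewrite !Hvan by lia. reflexivity.
Qed.

Close Scope R_scope.
Open Scope Z_scope.

Definition defect (x : nat -> Z) (N : Z) (k : nat) : Z :=
  let K := Z.of_nat k in
  (K + 1) * (N + 1 - K) * x (k - 1)%nat - (K * (K + 1) - N - 1) * x k
  - K * (N + K + 2) * x (k + 1)%nat.

Lemma defect_next_row_1 (x : nat -> Z) (N : Z) :
  2 * defect (next_row x) (N + 1) 1 = defect x N 1 + defect x N 2.
Proof. unfold defect; cbn [next_row Nat.sub Nat.add Z.of_nat]. ring. Qed.

Lemma defect_next_row (x : nat -> Z) (N : Z) (j : nat) :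
  let K := Z.of_nat (S (S j)) in
  K * (K + 1) * defect (next_row x) (N + 1) (S (S j)) =
  (K + 1) * (K + 1) * defect x N (S j) + (K * K + K - 1) * defect x N (S (S j))
  + K * K * defect x N (S (S (S j))).
Proof.
  unfold defect. cbv zeta.
  replace (S (S j) - 1)%nat with (S j) by lia.
  replace (S (S j) + 1)%nat with (S (S (S j))) by lia.
  replace (S j - 1)%nat with j by lia.
  replace (S j + 1)%nat with (S (S j)) by lia.
  replace (S (S (S j)) - 1)%nat with (S (S j)) by lia.
  replace (S (S (S j)) + 1)%nat with (S (S (S (S j)))) by lia.
  cbn [next_row]. rewrite !Nat2Z.inj_succ. ring.
Qed.

Lemma defect_free_next_row (x : nat -> Z) (N : Z) :
  (forall k, (1 <= k)%nat -> defect x N k = 0) ->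
  forall k, (1 <= k)%nat -> defect (next_row x) (N + 1) k = 0.
Proof.
  intros Hx k Hk.
  destruct k as [|[|j]]; [lia| |].
  - pose proof (defect_next_row_1 x N) as E.
    rewrite !Hx in E by lia. lia.
  - pose proof (defect_next_row x N j) as E; cbv zeta in E.
    rewrite !Hx in E by lia.
    assert (0 < Z.of_nat (S (S j)) * (Z.of_nat (S (S j)) + 1)) by nia.
    nia.
Qed.

Lemma defect_free_rows (b : nat -> nat -> Z) (Hb : is_b b) (n : nat) :
  forall k, (1 <= k)%nat -> defect (b n) (Z.of_nat n) k = 0.
Proof.
  induction n as [|n IH]; intros k Hk.
  - (* row 0 is (1, 0, 0, ...) and the k = 1 coefficient of b_0^(0) vanishes *)
    pose proof (proj2 Hb 0%nat) as Hvan.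
    unfold defect. destruct k as [|[|k]]; [lia| |]; simpl.
    + rewrite (Hvan 1%nat), (Hvan 2%nat) by lia. ring.
    + rewrite !Hvan by lia. ring.
  - rewrite Nat2Z.inj_succ.
    pose proof (defect_free_next_row (b n) (Z.of_nat n) IH k Hk) as Hnext.
    unfold defect in *. rewrite !(row_recurrence b Hb n). exact Hnext.
Qed.

Theorem theorem5 (b : nat -> nat -> Z) (Hb : is_b b) (n k : nat) (hk : (1 <= k)%nat) :
  ((Z.of_nat k + 1) * (Z.of_nat n + 1 - Z.of_nat k) * b n (k - 1)%nat
   = (Z.of_nat k * (Z.of_nat k + 1) - Z.of_nat n - 1) * b n k
     + Z.of_nat k * (Z.of_nat n + Z.of_nat k + 2) * b n (k + 1)%nat)%Z.
Proof.
  pose proof (defect_free_rows b Hb n k hk) as Hdefect.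
  unfold defect in Hdefect. lia.
Qed.
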